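(* The competitive ratio of the (offline-chosen) better algorithm between MTFO and MTFE is at least $1.75$ and at most $2$ (full cost model). That is: (i) for every list and every sequence $\sigma$, $\min\{\mathrm{MTFO}(\sigma),\mathrm{MTFE}(\sigma)\}\le 2\,\mathrm{OPT}(\sigma)$; and (ii) for every $c<1.75$ and every constant $b$ there exist a list and a sequence $\sigma$ with $\min\{\mathrm{MTFO}(\sigma),\mathrm{MTFE}(\sigma)\}>c\cdot\mathrm{OPT}(\sigma)+b$.
   Context: Static list update: a list of distinct items in some initial order; serving a request to the item at position $i$ (from the front) costs $i$ (full cost model); the accessed item may be moved closer to the front for free; two adjacent items may be swapped at cost $1$. $A(\sigma)$ is the total cost of algorithm $A$ and $\mathrm{OPT}(\sigma)$ the minimum cost of any offline algorithm from the same initial list. MTFO moves a requested item to the front on the 1st, 3rd, 5th, ... request to that item; MTFE on the 2nd, 4th, 6th, ... request; otherwise they leave it in place, and they make no paid exchanges. *)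

From mathcomp Require Import all_boot.
From Stdlib Require Import Reals.

Set Implicit Arguments.
Unset Strict Implicit.
Unset Printing Implicit Defensive.

(* Items are natural numbers; a list is a duplicate-free [seq nat], front = head.
   The position (1-based) of x in L is (index x L).+1. *)

(* The requested item r is moved to the front iff the number of
   earlier requests to r has parity [p] (false = even, true = odd); no paid
   exchanges. *)
Fixpoint run_parity (p : bool) (L past s : seq nat) : nat :=
  match s with
  | [::] => 0
  | r :: s' =>
      let L' := if odd (count_mem r past) == p then r :: rem r L else L in
      (index r L).+1 + run_parity p L' (rcons past r) s'
  end.

(* MTFO: move to front on the 1st, 3rd, 5th, ... request to an item
   (i.e. when an even number of earlier requests to it occurred). *)
Definition MTFO (L s : seq nat) : nat := run_parity false L [::] s.
(* MTFE: move to front on the 2nd, 4th, 6th, ... request to an item. *)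
Definition MTFE (L s : seq nat) : nat := run_parity true L [::] s.

(* Paid exchange of the adjacent items at positions i and i+1 (0-based);
   it costs 1 (an out-of-range index does nothing but is still charged). *)
Definition swap_adj (i : nat) (L : seq nat) : seq nat :=
  if i.+1 < size L
  then take i L ++ [:: nth 0 L i.+1; nth 0 L i] ++ drop i.+2 L
  else L.

(* Free exchange: move item r to the 0-based position j (j <= current position). *)
Definition move_to (j : nat) (r : nat) (L : seq nat) : seq nat :=
  let L0 := rem r L in take j L0 ++ r :: drop j L0.

(* An offline schedule gives, for each request, a sequence of paid adjacent
   exchanges performed before serving it, and a target position j for the free
   move of the requested item after serving it (clamped to the current position,
   so only moves toward the front are possible). *)
Fixpoint off_cost (L s : seq nat) (sch : seq (seq nat * nat)) : nat :=
  match s, sch with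
  | r :: s', (ps, j) :: sch' =>
      let L1 := foldl (fun L i => swap_adj i L) L ps in
      size ps + (index r L1).+1
        + off_cost (move_to (minn j (index r L1)) r L1) s' sch'
  | _, _ => 0
  end.

Definition is_OPT (L s : seq nat) (n : nat) : Prop :=
  (exists sch, size sch = size s /\ off_cost L s sch = n) /\
  (forall sch, size sch = size s -> n <= off_cost L s sch).

Definition valid_instance (L s : seq nat) : Prop :=
  uniq L /\ all (fun x => x \in L) s.

From mathcomp Require Import all_boot zify.
From Stdlib Require Import Reals Lra Classical Wf_nat.

Set Implicit Arguments.
Unset Strict Implicit.
Unset Printing Implicit Defensive.

(* We prove MTFO(s) + MTFE(s) <= 4 OFF(s) for every offline
   schedule OFF, by an amortized analysis with a potential that is a sum over
   the pairs of items.  The cost of an access is the number of items ahead of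
   the accessed one, so it splits into contributions of pairs; the potential
   of a pair depends only on five bits (the parities of the numbers of requests
   to its two items, and their relative order in the three lists), and is
   given by a table of 32 values checked against the two possible kinds of
   request by enumeration.  A paid exchange of the offline algorithm changes a
   single pair, hence the potential by at most 3 < 4.

   On the list 0, ..., m-1 consider the period
   u, each item of u twice, u reversed, each item of u reversed twice.  Both
   online algorithms pay 3.5 m^2 + O(m) per period and return to the initial
   list, whereas an offline algorithm moving an item only on the first of two
   consecutive requests pays 2 m^2 + O(m); repeating the period k times with k
   and m large beats every ratio c < 7/4 and every additive constant b. *)

Definition before (K : seq nat) (x y : nat) : bool := index x K < index y K.

Lemma before_irr K x : before K x x = false.
Proof. by rewrite /before ltnn. Qed.

Lemma before_asym K x y : before K x y -> before K y x = false.
Proof. by rewrite /before => /ltnW; rewrite leqNgt => /negbTE. Qed.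

Lemma before_total K x y : x \in K -> y \in K -> x != y ->
  before K y x = ~~ before K x y.
Proof.
move=> xK yK xy; rewrite /before -leqNgt ltn_neqAle.
case: eqVneq => [/(index_inj 0 yK xK) eyx|//].
by rewrite eyx eqxx in xy.
Qed.

Lemma before_rem r M x y : x != r -> y != r -> before (rem r M) x y = before M x y.
Proof.
move=> xr yr; rewrite /before; elim: M => [//|a M IH] /=.
case: eqP => [->|ar] /=.
  by rewrite (eq_sym r x) (negbTE xr) (eq_sym r y) (negbTE yr) ltnS.
by case: eqP => ax; case: eqP => ay //; rewrite !ltnS.
Qed.

Lemma before_mtf_other r K x y : x != r -> y != r ->
  before (r :: rem r K) x y = before K x y.
Proof.
move=> xr yr; rewrite -(before_rem K xr yr) /before /=.
by rewrite (eq_sym r x) (negbTE xr) (eq_sym r y) (negbTE yr) ltnS.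
Qed.

Lemma before_mtf_front r K y : y != r -> before (r :: rem r K) r y.
Proof. by move=> yr; rewrite /before /= eqxx (eq_sym r y) (negbTE yr). Qed.

Lemma before_mtf_back r K y : before (r :: rem r K) y r = false.
Proof. by rewrite /before /= eqxx ltn0. Qed.

Lemma rem_cat_notin (r : nat) (A B : seq nat) :
  r \notin A -> rem r (A ++ B) = A ++ rem r B.
Proof.
elim: A => [//|a A IH] /=; rewrite inE negb_or => /andP [ra rA].
by rewrite eq_sym (negbTE ra) IH.
Qed.

Lemma index_cat_notin (A B : seq nat) b :
  b \notin A -> index b (A ++ b :: B) = size A.
Proof. by move=> bA; rewrite index_cat (negbTE bA) /= eqxx addn0. Qed.

Definition ahead (r : nat) (K : seq nat) : seq nat := take (index r K) K.

Lemma ahead_notin r K : r \notin ahead r K.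
Proof.
rewrite /ahead; elim: K => [//|a K IH] /=; case: eqP => [//|ar] /=.
by rewrite inE negb_or IH andbT eq_sym; apply/eqP.
Qed.

Lemma size_ahead r K : r \in K -> size (ahead r K) = index r K.
Proof. by move=> rK; rewrite size_take index_mem rK. Qed.

Lemma split_at r K : r \in K -> K = ahead r K ++ r :: drop (index r K).+1 K.
Proof.
move=> rK; rewrite -{1}(cat_take_drop (index r K) K) (drop_nth r) ?index_mem //.
by rewrite nth_index.
Qed.

Lemma move_to_split j r K : r \in K -> j <= index r K ->
  move_to j r K
  = take j (ahead r K) ++ r :: drop j (ahead r K) ++ drop (index r K).+1 K.
Proof.
move=> rK ji; rewrite /move_to {1 2}(split_at rK) rem_cat_notin ?ahead_notin //=.
rewrite eqxx take_cat drop_cat size_ahead // ltn_neqAle ji andbT.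
case: eqVneq => [->|_] //; rewrite -(size_ahead rK) take_size drop_size subnn.
by rewrite take0 drop0 cats0.
Qed.

Lemma move_to_id r K : r \in K -> move_to (index r K) r K = K.
Proof.
move=> rK; rewrite move_to_split // -{1 2}(size_ahead rK) take_size drop_size /=.
exact: (esym (split_at rK)).
Qed.

Lemma perm_move_to j r K : r \in K -> perm_eq (move_to j r K) K.
Proof.
move=> rK; rewrite /move_to (permPr (perm_to_rem rK)).
apply/permP => a; rewrite count_cat /= -{3}[rem r K](cat_take_drop j) count_cat.
by rewrite addnCA.
Qed.

Lemma before_move_to_other j r K x y : uniq K -> x != r -> y != r ->
  before (move_to j r K) x y = before K x y.
Proof.
move=> uK xr yr; rewrite -(before_rem _ xr yr) -(before_rem K xr yr) /move_to.
have rK0 : r \notin rem r K by rewrite mem_rem_uniqF.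
rewrite rem_cat_notin /= ?eqxx ?cat_take_drop //.
by apply: contra rK0; apply: mem_take.
Qed.

Lemma before_move_to_front j r K y : r \in K -> j <= index r K ->
  before K r y -> before (move_to j r K) r y.
Proof.
move=> rK ji ry; have yA : y \notin ahead r K.
  apply: contraL ry => yA; rewrite /before -leqNgt {1}(split_at rK) index_cat yA.
  by rewrite -(size_ahead rK) ltnW // index_mem.
have sj : size (take j (ahead r K)) = j by rewrite size_takel // size_ahead.
have yT : y \notin take j (ahead r K) by apply: contra yA; apply: mem_take.
have rT : r \notin take j (ahead r K) by apply: contra (ahead_notin r K); apply: mem_take.
rewrite /before move_to_split // index_cat_notin // sj index_cat (negbTE yT) sj.
have ry' : r != y by apply: contraTneq ry => <-; rewrite before_irr.
by rewrite /= (negbTE ry') addnS ltnS leq_addr.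
Qed.

Lemma swap_split i K : i.+1 < size K ->
  K = take i K ++ nth 0 K i :: nth 0 K i.+1 :: drop i.+2 K /\
  swap_adj i K = take i K ++ nth 0 K i.+1 :: nth 0 K i :: drop i.+2 K.
Proof.
move=> si; split; last by rewrite /swap_adj si.
by rewrite -{1}(cat_take_drop i K) (drop_nth 0) 1?(drop_nth 0 (n:=i.+1)) //; lia.
Qed.

Lemma perm_swap i K : perm_eq (swap_adj i K) K.
Proof.
case: (ltnP i.+1 (size K)) => si; last by rewrite /swap_adj ltnNge si.
have [EK ->] := swap_split si; rewrite [in X in perm_eq _ X]EK.
by apply/permP => p; rewrite !count_cat /=; lia.
Qed.

Lemma before_exchange T D a b x y : uniq (T ++ a :: b :: D) ->
  ~~ ((x == a) && (y == b) || (x == b) && (y == a)) ->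
  before (T ++ b :: a :: D) x y = before (T ++ a :: b :: D) x y.
Proof.
move=> + hxy; rewrite cat_uniq /= !negb_or.
move=> /and5P [_ /and3P [aT bT _] /andP [ab _] _ _].
have rem_exchange c : c \in [:: a; b] ->
    rem c (T ++ b :: a :: D) = rem c (T ++ a :: b :: D).
  rewrite !inE => /orP [] /eqP ->; rewrite !rem_cat_notin //= !eqxx //.
    by rewrite eq_sym (negbTE ab).
  by rewrite (negbTE ab).
case: (eqVneq x y) => [->|xy]; first by rewrite !before_irr.
have [c [cx cy cab]] : exists c, [/\ x != c, y != c & c \in [:: a; b]].
  case: (eqVneq x a) => [xa|xa]; case: (eqVneq y a) => [ya|ya].
  - by rewrite xa ya eqxx in xy.
  - exists b; rewrite xa ab !inE eqxx orbT; split=> //.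
    by apply: contraNneq hxy => ->; rewrite xa !eqxx.
  - exists b; rewrite ya eq_sym ab !inE eqxx orbT; split=> //.
    by apply: contraNneq hxy => ->; rewrite ya !eqxx orbT.
  - by exists a; rewrite !inE eqxx.
by rewrite -(before_rem _ cx cy) rem_exchange // before_rem.
Qed.

Lemma before_swap_other i K x y : uniq K ->
  ~~ ((x == nth 0 K i) && (y == nth 0 K i.+1) ||
      (x == nth 0 K i.+1) && (y == nth 0 K i)) ->
  before (swap_adj i K) x y = before K x y.
Proof.
move=> uK hxy.
case: (ltnP i.+1 (size K)) => si; last by rewrite /swap_adj ltnNge si.
have [EK ->] := swap_split si; rewrite [in RHS]EK.
by apply: before_exchange => //; rewrite -EK.
Qed.

Lemma sum_nat_of_bool (a : pred nat) L : \sum_(y <- L) (a y : nat) = count a L.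
Proof. by rewrite -sum1_count [RHS]big_mkcond. Qed.

Lemma count_index_lt (K : seq nat) i : uniq K ->
  count (fun y => index y K < i) K = minn i (size K).
Proof.
elim: K i => [|a K IH] i /=; first by rewrite minn0.
case/andP => aK uK; rewrite eqxx.
have -> : count (fun y => (if a == y then 0 else (index y K).+1) < i) K
        = count (fun y => index y K < i.-1) K.
  apply: eq_in_count => y yK /=.
  by rewrite ifN; [case: i | apply: contraNneq aK => ->].
by rewrite IH //; case: i => [|i] /=; lia.
Qed.

Lemma index_as_sum L K r : uniq K -> perm_eq K L -> r \in K ->
  index r K = \sum_(y <- L) (before K y r : nat).
Proof.
move=> uK pKL rK; rewrite sum_nat_of_bool -(permP pKL) count_index_lt //.
by apply/esym/minn_idPl/ltnW; rewrite index_mem.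
Qed.

Definition parity_step (p : bool) (past K : seq nat) (r : nat) : seq nat :=
  if odd (count_mem r past) == p then r :: rem r K else K.

Lemma perm_parity_step p past K r L : r \in K -> perm_eq K L ->
  perm_eq (parity_step p past K r) L.
Proof.
move=> rK pKL; rewrite /parity_step; case: ifP => // _.
by rewrite -(permPr pKL) perm_sym perm_to_rem.
Qed.

Lemma before_parity_other p past K r x y : x != r -> y != r ->
  before (parity_step p past K r) x y = before K x y.
Proof. by move=> xr yr; rewrite /parity_step; case: ifP => _ //; apply: before_mtf_other. Qed.

Lemma before_parity_front p past K r y : y != r ->
  before (parity_step p past K r) r y = (odd (count_mem r past) == p) || before K r y.
Proof. by move=> yr; rewrite /parity_step; case: ifP => _ //; apply: before_mtf_front. Qed.

Lemma before_parity_back p past K r y :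
  before (parity_step p past K r) y r = (odd (count_mem r past) != p) && before K y r.
Proof. by rewrite /parity_step; case: ifP => _ //; apply: before_mtf_back. Qed.

Lemma count_rcons (past : seq nat) r x :
  count_mem x (rcons past r) = count_mem x past + (r == x).
Proof. by rewrite -cats1 count_cat /= addn0. Qed.

(* For items x ahead of y in the initial list it depends
   on five bits: the parities px, py of the numbers of requests to x and to y
   so far, and whether x is ahead of y in the list of MTFO (o), of MTFE (e)
   and of the offline algorithm (q).  The table lists the values (between 0
   and 3) in the order of the binary numeral px py o e q. *)
Definition phi_table : seq nat :=
  [:: 0; 3; 2; 1; 1; 2; 3; 0; 0; 3; 1; 1; 3; 3; 3; 0;
      0; 3; 3; 3; 1; 1; 3; 0; 0; 3; 1; 2; 2; 1; 3; 0].

Definition phi (px py o e q : bool) : nat :=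
  nth 0 phi_table (16 * px + 8 * py + 4 * o + 2 * e + q).

Lemma phi_le3 px py o e q : phi px py o e q <= 3.
Proof. by case: px; case: py; case: o; case: e; case: q. Qed.

(* Amortized cost of a request to the front item x of the pair: MTFO, MTFE and
   the offline algorithm each pay 1 for y when y stands ahead of x in their
   list; x moves to the front of the list of MTFO (resp. MTFE) iff its request
   count was even (resp. odd), and the offline algorithm may only bring x
   forward (q ==> q'). *)
Lemma phi_request_front (px py o e q q' : bool) : q ==> q' ->
  ~~ o + ~~ e + phi (~~ px) py (~~ px || o) (px || e) q'
  <= 4 * ~~ q + phi px py o e q.
Proof. by case: px; case: py; case: o; case: e; case: q; case: q'. Qed.

Lemma phi_request_back (px py o e q q' : bool) : q' ==> q ->
  o + e + phi px (~~ py) (py && o) (~~ py && e) q'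
  <= 4 * q + phi px py o e q.
Proof. by case: px; case: py; case: o; case: e; case: q; case: q'. Qed.

(* Potential of the pair (x, y), counted once: only when x is ahead of y in
   the initial list L. *)
Definition pair_pot (L KO KE K past : seq nat) (x y : nat) : nat :=
  if before L x y then
    phi (odd (count_mem x past)) (odd (count_mem y past))
        (before KO x y) (before KE x y) (before K x y)
  else 0.

Definition pot (L KO KE K past : seq nat) : nat :=
  \sum_(x <- L) \sum_(y <- L) pair_pot L KO KE K past x y.

Lemma pot_init L : pot L L L L [::] = 0.
Proof.
rewrite /pot big1 // => x _; rewrite big1 // => y _.
by rewrite /pair_pot; case: ifP => // ->.
Qed.

Lemma pair_pot_le3 L KO KE K past a b :
  pair_pot L KO KE K past a b + pair_pot L KO KE K past b a <= 3.
Proof.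
rewrite /pair_pot; case: ifP => hab; first by rewrite (before_asym hab) addn0 phi_le3.
by case: ifP => _; rewrite ?phi_le3.
Qed.

Lemma pair_pot_request L KO KE K past r j y :
  uniq L -> perm_eq KO L -> perm_eq KE L -> perm_eq K L -> r \in L -> y \in L ->
  j <= index r K ->
  let pot' := pair_pot L (parity_step false past KO r) (parity_step true past KE r)
                (move_to j r K) (rcons past r) in
  before KO y r + before KE y r + (pot' r y + pot' y r)
  <= 4 * before K y r + (pair_pot L KO KE K past r y + pair_pot L KO KE K past y r).
Proof.
move=> uL pO pE pK rL yL ji /=.
have in_perm M : perm_eq M L -> forall z, z \in L -> z \in M.
  by move=> pM z; rewrite (perm_mem pM).
have rK := in_perm _ pK _ rL; have yK := in_perm _ pK _ yL.
case: (eqVneq y r) => [->|yr]; first by rewrite /pair_pot !before_irr.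
have ry : r != y by rewrite eq_sym.
have [mK yM] : r \in move_to j r K /\ y \in move_to j r K.
  by rewrite !(perm_mem (perm_move_to j rK)).
have q_front : before K r y ==> before (move_to j r K) r y.
  by apply/implyP; apply: before_move_to_front.
have cy : count_mem y (rcons past r) = count_mem y past.
  by rewrite count_rcons (negbTE ry) addn0.
have cr : odd (count_mem r (rcons past r)) = ~~ odd (count_mem r past).
  by rewrite count_rcons eqxx addn1.
rewrite /pair_pot cy cr !before_parity_front ?before_parity_back //.
rewrite !eqbF_neg !eqb_id negbK.
rewrite (before_total rL yL ry) (before_total (in_perm _ pO _ rL) (in_perm _ pO _ yL) ry).
rewrite (before_total (in_perm _ pE _ rL) (in_perm _ pE _ yL) ry).
rewrite (before_total rK yK ry) (before_total mK yM ry).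
case: (before L r y) => /=; rewrite ?addn0 ?add0n.
- exact: phi_request_front.
- by apply: phi_request_back; rewrite implybNN.
Qed.

Lemma double_sum_exchange (L : seq nat) (g g' : nat -> nat -> nat)
    (d : nat -> nat -> bool) :
  (forall x y, ~~ d x y -> g' x y = g x y) ->
  \sum_(x <- L) \sum_(y <- L) g' x y + \sum_(x <- L) \sum_(y <- L) d x y * g x y
  = \sum_(x <- L) \sum_(y <- L) g x y + \sum_(x <- L) \sum_(y <- L) d x y * g' x y.
Proof.
move=> eq_off; rewrite -!big_split; apply: eq_bigr => x _ /=.
rewrite -!big_split; apply: eq_bigr => y _ /=.
case: (boolP (d x y)) => h; first by rewrite !mul1n addnC.
by rewrite eq_off // !mul0n.
Qed.

Lemma sum_point (L : seq nat) b (c : nat -> nat) : uniq L -> b \in L ->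
  \sum_(y <- L) (y == b) * c y = c b.
Proof.
move=> uL bL; rewrite (bigD1_seq b) //= eqxx mul1n big1 ?addn0 //.
by move=> y /negbTE ->.
Qed.

Lemma double_sum_point (L : seq nat) a b (h : nat -> nat -> nat) :
  uniq L -> a \in L -> b \in L ->
  \sum_(x <- L) \sum_(y <- L) ((x == a) && (y == b)) * h x y = h a b.
Proof.
move=> uL aL bL; rewrite -(sum_point (fun x => h x b) uL aL).
apply: eq_bigr => x _; rewrite -(sum_point (h x) uL bL).
case: (x == a); first by rewrite mul1n.
by rewrite mul0n big1 // => y _; rewrite mul0n.
Qed.

Lemma double_sum_cross (L : seq nat) r (h : nat -> nat -> nat) :
  uniq L -> r \in L -> h r r = 0 ->
  \sum_(x <- L) \sum_(y <- L) ((x == r) || (y == r)) * h x y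
  = \sum_(y <- L) (h r y + h y r).
Proof.
move=> uL rL hrr; rewrite big_split /= (bigD1_seq r) //=; congr (_ + _).
  by apply: eq_bigr => y _; rewrite eqxx mul1n.
rewrite [RHS](bigD1_seq r) //= hrr add0n; apply: eq_bigr => x /negbTE xr.
by rewrite -(sum_point (h x) uL rL); apply: eq_bigr => y _; rewrite xr.
Qed.

Lemma pot_swap L KO KE K past i : perm_eq K L -> uniq L ->
  pot L KO KE (swap_adj i K) past <= pot L KO KE K past + 3.
Proof.
move=> pKL uL; have uK : uniq K by rewrite (perm_uniq pKL).
case: (ltnP i.+1 (size K)) => si; last by rewrite /swap_adj ltnNge si leq_addr.
set a := nth 0 K i; set b := nth 0 K i.+1.
have [aL bL] : a \in L /\ b \in L by rewrite -!(perm_mem pKL) !mem_nth //; lia.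
have ab : a != b by rewrite nth_uniq //; lia.
set g := pair_pot L KO KE K past; set g' := pair_pot L KO KE (swap_adj i K) past.
pose d x y := (x == a) && (y == b) || (x == b) && (y == a).
have exchange := @double_sum_exchange L g g' d.
have /exchange {}exchange : forall x y, ~~ d x y -> g' x y = g x y.
  by move=> x y dxy; rewrite /g /g' /pair_pot before_swap_other.
have split_d h : \sum_(x <- L) \sum_(y <- L) d x y * h x y = h a b + h b a.
  rewrite -(double_sum_point h uL aL bL) -(double_sum_point h uL bL aL) -big_split.
  apply: eq_bigr => x _; rewrite -big_split; apply: eq_bigr => y _ /=.
  suff -> : (d x y : nat) = ((x == a) && (y == b)) + ((x == b) && (y == a)).
    by rewrite mulnDl.
  rewrite /d; case: (eqVneq x a) => [->|_] /=; last by rewrite add0n.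
  by rewrite (negbTE ab) /= addn0 orbF.
rewrite /pot -/g -/g'; move: exchange; rewrite !split_d.
by have := pair_pot_le3 L KO KE (swap_adj i K) past a b; rewrite -/g'; lia.
Qed.

Lemma pot_request (L KO KE K past : seq nat) (r j : nat) :
  uniq L -> perm_eq KO L -> perm_eq KE L -> perm_eq K L -> r \in L ->
  j <= index r K ->
  index r KO + index r KE
  + pot L (parity_step false past KO r) (parity_step true past KE r)
      (move_to j r K) (rcons past r)
  <= 4 * index r K + pot L KO KE K past.
Proof.
move=> uL pO pE pK rL ji.
have index_sum M : perm_eq M L -> index r M = \sum_(y <- L) (before M y r : nat).
  by move=> pM; apply: index_as_sum; rewrite ?(perm_uniq pM) ?(perm_mem pM).
set g := pair_pot L KO KE K past.
set g' := pair_pot L (parity_step false past KO r) (parity_step true past KE r)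
            (move_to j r K) (rcons past r).
pose d x y := (x == r) || (y == r).
have exchange := @double_sum_exchange L g g' d.
have /exchange {}exchange : forall x y, ~~ d x y -> g' x y = g x y.
  move=> x y; rewrite negb_or => /andP [xr yr].
  rewrite /g /g' /pair_pot !count_rcons (eq_sym r x) (eq_sym r y).
  rewrite (negbTE xr) (negbTE yr) !addn0 !before_parity_other //.
  by rewrite before_move_to_other // (perm_uniq pK).
have [g0 g'0] : g r r = 0 /\ g' r r = 0 by rewrite /g /g' /pair_pot before_irr.
rewrite !double_sum_cross // in exchange.
have step : \sum_(y <- L) (before KO y r + before KE y r + (g' r y + g' y r))
         <= 4 * \sum_(y <- L) before K y r + \sum_(y <- L) (g r y + g y r).
  rewrite big_distrr -big_split big_seq [X in _ <= X]big_seq /=.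
  by apply: leq_sum => y yL; exact: pair_pot_request.
rewrite !big_split /= in step exchange.
by rewrite /pot -/g -/g' (index_sum KO) // (index_sum KE) // (index_sum K) //; lia.
Qed.

Lemma pot_swaps (L KO KE past ps : seq nat) : uniq L -> forall K, perm_eq K L ->
  let K' := foldl (fun K i => swap_adj i K) K ps in
  pot L KO KE K' past <= pot L KO KE K past + 3 * size ps /\ perm_eq K' L.
Proof.
move=> uL; elim: ps => [|i ps IH] K pK /=; first by rewrite addn0.
have pK' : perm_eq (swap_adj i K) L by rewrite (permPl (perm_swap i K)).
have [le_pot ->] := IH _ pK'; split=> //.
by have := pot_swap KO KE past i pK uL; lia.
Qed.

Lemma amortized (L : seq nat) : uniq L ->
  forall (s KO KE K past : seq nat) sch,
  perm_eq KO L -> perm_eq KE L -> perm_eq K L -> all (fun x => x \in L) s ->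
  size sch = size s ->
  run_parity false KO past s + run_parity true KE past s
  <= 4 * off_cost K s sch + pot L KO KE K past.
Proof.
move=> uL; elim=> [|r s IH] KO KE K past [|[ps j] sch] pO pE pK //=.
move=> /andP [rL sL] [ssch].
have [le_swaps pK1] := pot_swaps KO KE past ps uL pK.
set K1 := foldl _ K ps in le_swaps pK1 *.
have rK1 : r \in K1 by rewrite (perm_mem pK1).
have le_req := pot_request past uL pO pE pK1 rL (geq_minr j (index r K1)).
have pK2 : perm_eq (move_to (minn j (index r K1)) r K1) L.
  by rewrite (permPl (perm_move_to _ rK1)).
have [rO rE] : r \in KO /\ r \in KE by rewrite (perm_mem pO) (perm_mem pE).
have le_rest := IH _ _ _ (rcons past r) sch
  (perm_parity_step false past rO pO) (perm_parity_step true past rE pE)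
  pK2 sL ssch.
rewrite -!/(parity_step _ past _ r); lia.
Qed.

(* Part (i): the better of MTFO and MTFE is 2-competitive, with no additive
   constant, since the potential starts at 0. *)
Lemma upper_bound (L s : seq nat) (opt : nat) :
  valid_instance L s -> is_OPT L s opt -> minn (MTFO L s) (MTFE L s) <= 2 * opt.
Proof.
move=> [uL sL] [[sch [ssch <-]] _].
have := amortized uL [::] (perm_refl L) (perm_refl L) (perm_refl L) sL ssch.
by rewrite pot_init addn0 /MTFO /MTFE; lia.
Qed.

Fixpoint serve_cost (K : seq nat) (s : seq (nat * bool)) : nat :=
  if s is (r, mv) :: s' then
    (index r K).+1 + serve_cost (if mv then r :: rem r K else K) s'
  else 0.

Fixpoint serve_list (K : seq nat) (s : seq (nat * bool)) : seq nat :=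
  if s is (r, mv) :: s' then serve_list (if mv then r :: rem r K else K) s'
  else K.

Lemma serve_cost_cat K s1 s2 :
  serve_cost K (s1 ++ s2) = serve_cost K s1 + serve_cost (serve_list K s1) s2.
Proof. by elim: s1 K => [|[r mv] s1 IH] K //=; rewrite IH addnA. Qed.

Lemma serve_list_cat K s1 s2 :
  serve_list K (s1 ++ s2) = serve_list (serve_list K s1) s2.
Proof. by elim: s1 K => [|[r mv] s1 IH] K //=. Qed.

Fixpoint decisions (p : bool) (past s : seq nat) : seq (nat * bool) :=
  if s is r :: s' then
    (r, odd (count_mem r past) == p) :: decisions p (rcons past r) s'
  else [::].

Lemma run_parity_serve p K past s :
  run_parity p K past s = serve_cost K (decisions p past s).
Proof. by elim: s K past => [|r s IH] K past //=; rewrite IH. Qed.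

Lemma decisions_cat p past s1 s2 :
  decisions p past (s1 ++ s2) = decisions p past s1 ++ decisions p (past ++ s1) s2.
Proof. by elim: s1 past => [|r s1 IH] past /=; rewrite ?cats0 ?IH ?cat_rcons. Qed.

Fixpoint tri (n : nat) : nat := if n is n'.+1 then tri n' + n else 0.

Lemma tri_double n : 2 * tri n = n * n.+1.
Proof. by elim: n => [|n IH] //=; rewrite mulnDr IH; lia. Qed.

Definition once (d : bool) (B : seq nat) : seq (nat * bool) := [seq (b, d) | b <- B].
Definition twice (d1 d2 : bool) (B : seq nat) : seq (nat * bool) :=
  flatten [seq [:: (b, d1); (b, d2)] | b <- B].

(* The four phases of the lower-bound sequence, stated with a prefix A (or C)
   of items that were already served, for the induction. *)
Lemma serve_once_stay (A B : seq nat) : uniq (A ++ B) ->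
  serve_cost (A ++ B) (once false B) = size A * size B + tri (size B) /\
  serve_list (A ++ B) (once false B) = A ++ B.
Proof.
elim: B A => [|b B IH] A /=; first by split; rewrite ?muln0 ?cats0.
move=> uAB; have bA : b \notin A.
  by move: uAB; rewrite cat_uniq => /and3P [_ /hasPn h _]; apply: h; rewrite inE eqxx.
have uAB' : uniq (rcons A b ++ B) by rewrite cat_rcons.
have [] := IH (rcons A b) uAB'; rewrite cat_rcons => -> ->.
by rewrite index_cat_notin // size_rcons; split=> //; lia.
Qed.

Lemma serve_once_mtf (A B : seq nat) : uniq (A ++ B) ->
  serve_cost (rev A ++ B) (once true B) = size A * size B + tri (size B) /\
  serve_list (rev A ++ B) (once true B) = rev B ++ rev A.
Proof.
elim: B A => [|b B IH] A /=; first by split; rewrite ?muln0 ?cats0.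
rewrite cat_uniq /= => /and3P [uA /norP [bA hAB] /andP [bB uB]].
have bA' : b \notin rev A by rewrite mem_rev.
have uAB : uniq (rcons A b ++ B) by rewrite cat_rcons cat_uniq uA /= negb_or bA hAB bB.
rewrite index_cat_notin // size_rev rem_cat_notin //= eqxx.
have [] := IH (rcons A b) uAB; rewrite rev_rcons /= => -> ->.
by rewrite size_rcons rev_cons cat_rcons; split=> //; lia.
Qed.

Lemma serve_twice_mtf_stay (A B : seq nat) : uniq (A ++ B) ->
  serve_cost (rev A ++ B) (twice true false B)
    = size A * size B + tri (size B) + size B /\
  serve_list (rev A ++ B) (twice true false B) = rev B ++ rev A.
Proof.
elim: B A => [|b B IH] A /=; first by split; rewrite ?muln0 ?cats0.
rewrite cat_uniq /= => /and3P [uA /norP [bA hAB] /andP [bB uB]].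
have bA' : b \notin rev A by rewrite mem_rev.
have uAB : uniq (rcons A b ++ B) by rewrite cat_rcons cat_uniq uA /= negb_or bA hAB bB.
rewrite index_cat_notin // size_rev rem_cat_notin //= !eqxx.
have [] := IH (rcons A b) uAB; rewrite rev_rcons /= => -> ->.
by rewrite size_rcons rev_cons cat_rcons; split=> //; lia.
Qed.

Lemma serve_twice_stay_mtf (C B : seq nat) : uniq (C ++ B) ->
  serve_cost (C ++ rev B) (twice false true B) = 2 * size B * (size C + size B) /\
  serve_list (C ++ rev B) (twice false true B) = rev B ++ C.
Proof.
elim: B C => [|b B IH] C /=; first by split; rewrite ?muln0 ?cats0.
rewrite cat_uniq /= => /and3P [uC /norP [bC hCB] /andP [bB uB]].
have bCB : b \notin C ++ rev B by rewrite mem_cat negb_or bC mem_rev.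
have uCB : uniq ((b :: C) ++ B) by rewrite /= mem_cat negb_or bC bB cat_uniq uC hCB.
rewrite rev_cons -cats1 catA index_cat_notin // size_cat size_rev.
rewrite rem_cat_notin //= eqxx cats0 -cat_cons.
have [-> ->] := IH (b :: C) uCB.
by rewrite -catA /=; split=> //; lia.
Qed.

Definition dbl (B : seq nat) : seq nat := flatten [seq [:: b; b] | b <- B].

Lemma count_dbl (B : seq nat) x : count_mem x (dbl B) = 2 * count_mem x B.
Proof. by elim: B => [|b B IH] //=; rewrite IH; case: (b == x) => /=; lia. Qed.

Lemma mem_dbl (B : seq nat) : dbl B =i B.
Proof. by elim: B => [|b B IH] x //=; rewrite !inE orbA orbb IH. Qed.

Lemma decisions_once p past (B : seq nat) d : uniq B ->
  {in B, forall b, (odd (count_mem b past) == p) = d} ->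
  decisions p past B = once d B.
Proof.
elim: B past => [|b B IH] past //= /andP [bB uB] par.
rewrite par ?mem_head //; congr (_ :: _); apply: IH => // x xB.
have bx : (b == x) = false by apply: contraNF bB => /eqP ->.
by rewrite count_rcons bx addn0 par // inE xB orbT.
Qed.

Lemma decisions_twice p past (B : seq nat) d : uniq B ->
  {in B, forall b, (odd (count_mem b past) == p) = d} ->
  decisions p past (dbl B) = twice d (~~ d) B.
Proof.
elim: B past => [|b B IH] past //= /andP [bB uB] par.
rewrite par ?mem_head // count_rcons eqxx addn1 /=.
have -> : (~~ odd (count_mem b past) == p) = ~~ d.
  by rewrite -(par b (mem_head _ _)); case: (odd _); case: (p).
congr [:: _, _ & _]; apply: IH => // x xB; have bx : (b == x) = false by apply: contraNF bB => /eqP ->.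
by rewrite !count_rcons bx !addn0 par // inE xB orbT.
Qed.

Definition period (u : seq nat) : seq nat := u ++ dbl u ++ rev u ++ dbl (rev u).

Definition online_period (p : bool) (u : seq nat) : seq (nat * bool) :=
  once (~~ p) u ++ twice p (~~ p) u ++ once p (rev u) ++ twice (~~ p) p (rev u).

Lemma decisions_period p past (u : seq nat) : uniq u ->
  {in u, forall x, ~~ odd (count_mem x past)} ->
  decisions p past (period u) = online_period p u.
Proof.
move=> uu even_past; have ur : uniq (rev u) by rewrite rev_uniq.
have count_u : {in u, forall x, count_mem x u = 1}.
  by move=> x xu; rewrite count_uniq_mem // xu.
rewrite /period !decisions_cat -!catA /online_period.
rewrite (decisions_once (B := u) (d := ~~ p)) ?(decisions_twice (B := u) (d := p))
  ?(decisions_once (B := rev u) (d := p))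
  ?(decisions_twice (B := rev u) (d := ~~ p)) ?negbK //;
  move=> x; rewrite ?mem_rev => xu;
  rewrite ?count_cat ?count_dbl ?count_rev ?count_u // ?oddD ?oddM
    (negbTE (even_past x xu)) /=; by case: (p).
Qed.

Lemma serve_online_period p (u : seq nat) : uniq u ->
  serve_cost u (online_period p u) = 3 * tri (size u) + 2 * size u * size u + size u /\
  serve_list u (online_period p u) = u.
Proof.
move=> uu; have ur : uniq (rev u) by rewrite rev_uniq.
have [c1 l1] := serve_once_stay (A := [::]) uu; have [c2 l2] := serve_once_stay (A := [::]) ur.
have [c3 l3] := serve_once_mtf (A := [::]) uu; have [c4 l4] := serve_once_mtf (A := [::]) ur.
have [c5 l5] := serve_twice_mtf_stay (A := [::]) uu; have [c6 l6] := serve_twice_mtf_stay (A := [::]) ur.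
have [c7 l7] := serve_twice_stay_mtf (C := [::]) uu; have [c8 l8] := serve_twice_stay_mtf (C := [::]) ur.
rewrite /= revK !cats0 size_rev in c1 c2 c3 c4 c5 c6 c7 c8 l1 l2 l3 l4 l5 l6 l7 l8.
rewrite /online_period !serve_cost_cat !serve_list_cat; case: p => /=.
- by rewrite l1 c1 l5 c5 l4 c4 l8 c8; split=> //; lia.
- by rewrite l3 c3 l7 c7 l2 c2 l6 c6; split=> //; lia.
Qed.

Definition offline_period (u : seq nat) : seq (nat * bool) :=
  once false u ++ twice true false u ++ once false (rev u) ++ twice true false (rev u).

Lemma serve_offline_period (u : seq nat) : uniq u ->
  serve_cost u (offline_period u) = 4 * tri (size u) + 2 * size u /\
  serve_list u (offline_period u) = u.
Proof.
move=> uu; have ur : uniq (rev u) by rewrite rev_uniq.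
have [c1 l1] := serve_once_stay (A := [::]) uu.
have [c2 l2] := serve_once_stay (A := [::]) ur.
have [c3 l3] := serve_twice_mtf_stay (A := [::]) uu.
have [c4 l4] := serve_twice_mtf_stay (A := [::]) ur.
rewrite /= revK !cats0 size_rev in c1 c2 c3 c4 l1 l2 l3 l4.
rewrite /offline_period !serve_cost_cat !serve_list_cat.
by rewrite l1 c1 l3 c3 l2 c2 l4 c4; split=> //; lia.
Qed.

Lemma requests_once d (B : seq nat) : map fst (once d B) = B.
Proof. by elim: B => //= b B ->. Qed.

Lemma requests_twice d1 d2 (B : seq nat) : map fst (twice d1 d2 B) = dbl B.
Proof. by elim: B => //= b B ->. Qed.

Lemma requests_offline_period u : map fst (offline_period u) = period u.
Proof. by rewrite /offline_period !map_cat !requests_once !requests_twice. Qed.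

Definition repeat_seq (T : Type) (k : nat) (s : seq T) : seq T := flatten (nseq k s).

Lemma mem_period (u : seq nat) : period u =i u.
Proof. by move=> x; rewrite !mem_cat !mem_dbl !mem_rev !orbb. Qed.

Lemma mem_repeat (k : nat) (s : seq nat) x : x \in repeat_seq k s -> x \in s.
Proof. by elim: k => [|k IH] //=; rewrite /repeat_seq /= mem_cat => /orP [|/IH]. Qed.

(* Every item is requested six times per period, so after whole periods every
   request count is even again: the online cost is the same for every period. *)
Lemma online_repeat p (u : seq nat) k past : uniq u ->
  {in u, forall x, ~~ odd (count_mem x past)} ->
  run_parity p u past (repeat_seq k (period u))
  = k * (3 * tri (size u) + 2 * size u * size u + size u).
Proof.
move=> uu; elim: k past => [|k IH] past even_past //=.
rewrite run_parity_serve /repeat_seq /= decisions_cat serve_cost_cat.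
rewrite decisions_period //; have [-> ->] := serve_online_period p uu.
rewrite -run_parity_serve IH ?mulSn // => x xu.
by rewrite count_cat oddD (negbTE (even_past x xu)) /period !count_cat !count_dbl
  count_rev (count_uniq_mem _ uu) xu.
Qed.

Lemma offline_repeat (u : seq nat) k : uniq u ->
  serve_cost u (repeat_seq k (offline_period u)) = k * (4 * tri (size u) + 2 * size u).
Proof.
move=> uu; elim: k => [|k IH] //=.
by rewrite /repeat_seq /= serve_cost_cat; have [-> ->] := serve_offline_period uu; rewrite IH.
Qed.

(* An annotated request sequence is served by an offline schedule without
   paid exchanges: "move" is a free move to position 0, "stay" a free move to
   a position N beyond the end of the list, which is clamped to the current one. *)
Definition schedule_of (N : nat) (s : seq (nat * bool)) : seq (seq nat * nat) :=
  [seq ([::], if d.2 then 0 else N) | d <- s].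

Lemma off_cost_schedule_of N (s : seq (nat * bool)) (K : seq nat) :
  uniq K -> all (fun d => d.1 \in K) s -> size K <= N ->
  off_cost K (map fst s) (schedule_of N s) = serve_cost K s.
Proof.
elim: s K => [|[r mv] s IH] K uK //= /andP [rK sK] KN.
rewrite add0n; congr (_ + _); have iK : index r K < size K by rewrite index_mem.
case: mv => /=.
- rewrite min0n /move_to take0 drop0 /=; apply: IH.
  + by rewrite /= mem_rem_uniqF // rem_uniq.
  + by apply: sub_all sK => d; rewrite /= -(perm_mem (perm_to_rem rK)).
  + by rewrite -(perm_size (perm_to_rem rK)).
- by rewrite (minn_idPr (leq_trans (ltnW iK) KN)) move_to_id // IH.
Qed.

Lemma opt_exists (L s : seq nat) sch : size sch = size s ->
  exists opt, is_OPT L s opt /\ opt <= off_cost L s sch.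
Proof.
move=> ssch.
pose P n := exists sch', size sch' = size s /\ off_cost L s sch' = n.
have [opt [[Popt opt_min] _]] := dec_inh_nat_subset_has_unique_least_element P
  (fun n => classic (P n)) (ex_intro _ _ (ex_intro _ sch (conj ssch erefl))).
exists opt; split; last by apply/leP/opt_min; exists sch.
by split=> // sch' ssch'; apply/leP/opt_min; exists sch'.
Qed.

Lemma INR_tri n : INR (tri n) = (INR n * (INR n + 1) / 2)%R.
Proof.
have := f_equal INR (tri_double n); rewrite !mult_INR (S_INR n) [INR 2]/= => h; lra.
Qed.

Lemma period_gap (c : R) : (0 <= c < 7 / 4)%R -> exists m : nat,
  (c * INR (4 * tri m + 2 * m) + 1 <= INR (3 * tri m + 2 * m * m + m))%R.
Proof.
move=> [c0 c74]; set d := (7 / 2 - 2 * c)%R.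
have [m m_large] := INR_unbounded (6 / d).
exists m; rewrite !plus_INR !mult_INR INR_tri /=.
have d0 : (0 < d)%R by rewrite /d; lra.
have dm : (6 < d * INR m)%R.
  have := Rmult_lt_compat_l d _ _ d0 m_large.
  by have -> : (d * (6 / d) = 6)%R by field; lra.
have m1 : (1 <= INR m)%R.
  case: m m_large dm => [|m] _; first by rewrite /= Rmult_0_r; lra.
  by rewrite S_INR; have := pos_INR m; lra.
have sq : (6 * INR m <= d * INR m * INR m)%R by nra.
have lin : (0 <= (7 - 4 * c) * INR m)%R by nra.
rewrite /d in sq; nra.
Qed.

Lemma map_repeat (T U : Type) (f : T -> U) k (s : seq T) :
  map f (repeat_seq k s) = repeat_seq k (map f s).
Proof. by rewrite /repeat_seq map_flatten map_nseq. Qed.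

Lemma lower_bound (c b : R) : (c < 7 / 4)%R ->
  exists (L s : seq nat) (opt : nat),
    valid_instance L s /\ is_OPT L s opt /\
    (INR (minn (MTFO L s) (MTFE L s)) > c * INR opt + b)%R.
Proof.
move=> c74; set c' := Rmax c 0.
have [m gap] : exists m : nat,
    (c' * INR (4 * tri m + 2 * m) + 1 <= INR (3 * tri m + 2 * m * m + m))%R.
  by apply: period_gap; split; [apply: Rmax_r | apply: Rmax_lub_lt; lra].
have [k k_large] := INR_unbounded b.
set u := iota 0 m; have uu : uniq u := iota_uniq 0 m.
have su : size u = m by rewrite size_iota.
set s := repeat_seq k (period u).
have online p : run_parity p u [::] s = k * (3 * tri m + 2 * m * m + m).
  by rewrite -su online_repeat.
have sch_ok : all (fun d => d.1 \in u) (repeat_seq k (offline_period u)).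
  apply/allP => d /(map_f fst) /=; rewrite map_repeat requests_offline_period.
  by move/mem_repeat; rewrite mem_period.
set sch := schedule_of m (repeat_seq k (offline_period u)).
have ssch : size sch = size s.
  by rewrite /sch /s size_map -requests_offline_period -map_repeat size_map.
have offline : off_cost u s sch = k * (4 * tri m + 2 * m).
  rewrite /s -requests_offline_period -map_repeat off_cost_schedule_of ?su //.
  by rewrite offline_repeat // su.
have [opt [is_opt opt_le]] := opt_exists u ssch.
exists u, s, opt; split.
  by split=> //; apply/allP => x /mem_repeat; rewrite mem_period.
split=> //; rewrite /MTFO /MTFE !online minnn.
rewrite offline in opt_le; move/leP/le_INR: opt_le.
rewrite !mult_INR => opt_le.
have c'0 : (0 <= c')%R by apply: Rmax_r.
have cc' : (c <= c')%R by apply: Rmax_l.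
have k0 := pos_INR k; have opt0 := pos_INR opt.
have := Rmult_le_compat_l _ _ _ c'0 opt_le.
nra.
Qed.

Theorem theorem6 :
  (forall (L s : seq nat) (opt : nat),
      valid_instance L s -> is_OPT L s opt ->
      minn (MTFO L s) (MTFE L s) <= 2 * opt)
  /\
  (forall c b : R, (c < 7 / 4)%R ->
      exists (L s : seq nat) (opt : nat),
        valid_instance L s /\ is_OPT L s opt /\
        (INR (minn (MTFO L s) (MTFE L s)) > c * INR opt + b)%R).
Proof. split; [exact: upper_bound | exact: lower_bound]. Qed.
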